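(* Let $q$ be a prime power, let $\mathbb{F}_q \subset \mathbb{F}_{q^m} \subset \mathbb{L}$ be finite fields with $[\mathbb{L}:\mathbb{F}_{q^m}] = u > 1$, and let $k,n,w$ be integers with $u<k<n\le m$ and $n-k > w > \lfloor (n-k)/2 \rfloor$. Let $\mathbf{g}\in\mathbb{F}_{q^m}^n$ with $\|\mathbf{g}\|_q = n$ and let $\mathbf{G}\in\mathbb{F}_{q^m}^{k\times n}$ be the matrix whose $i$-th row is $(g_1^{q^{i-1}},\dots,g_n^{q^{i-1}})$, $i=1,\dots,k$. Let $\mathbf{x}\in\mathbb{L}^k$ be such that $x_{k-u+1},\dots,x_k$ form a basis of $\mathbb{L}$ over $\mathbb{F}_{q^m}$, let $\mathbf{s}\in\mathbb{L}^w$ with $\|\mathbf{s}\|_q = w$, let $\mathbf{P}\in\mathrm{GL}_n(\mathbb{F}_q)$, set $\mathbf{z} = (\mathbf{s}\mid\mathbf{0})\mathbf{P}^{-1}$ and $\mathbf{K}=\mathbf{x}\mathbf{G}+\mathbf{z}$. Let $\gamma_1,\dots,\gamma_u$ be a basis of $\mathbb{L}$ over $\mathbb{F}_{q^m}$, and for $i=1,\dots,u$ set $\mathbf{K}_i = \mathrm{Tr}_{\mathbb{L}/\mathbb{F}_{q^m}}(\gamma_i\mathbf{K})$ and $\mathbf{b}_i = (\mathrm{Tr}_{\mathbb{L}/\mathbb{F}_{q^m}}(\gamma_i\mathbf{s})\mid\mathbf{0})\in\mathbb{F}_{q^m}^n$. Let $\mathcal{C}_{\mathrm{pub}} = \mathcal{G}_k(\mathbf{g})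 + \sum_{i=1}^u \mathbb{F}_{q^m}\mathbf{K}_i$ and $\mathcal{B} = \sum_{i=1}^u \mathbb{F}_{q^m}\mathbf{b}_i$, both subspaces of $\mathbb{F}_{q^m}^n$. Let $f = n-w-k-1$ and assume $\dim_{\mathbb{F}_{q^m}}\Lambda_f(\mathcal{B}) = w$. Then: (1) the dual code $\Lambda_f(\mathcal{C}_{\mathrm{pub}})^{\perp}$ has dimension $1$ and is generated by $(\mathbf{0}\mid\mathbf{h})\mathbf{P}^T$ for some $\mathbf{h}\in\mathbb{F}_{q^m}^{n-w}$ with $\|\mathbf{h}\|_q = n-w$; (2) for every nonzero $\widetilde{\mathbf{h}}\in\Lambda_f(\mathcal{C}_{\mathrm{pub}})^{\perp}$ and every $\mathbf{T}\in\mathrm{GL}_n(\mathbb{F}_q)$ such that $\widetilde{\mathbf{h}}(\mathbf{T}^{-1})^T = (\mathbf{0}\mid\mathbf{h}')$ for some $\mathbf{h}'\in\mathbb{F}_{q^m}^{n-w}$ (the first $w$ entries being zero), there exists $\mathbf{z}^*\in\mathbb{L}^w$ with $\|\mathbf{z}^*\|_q = w$ such that $\mathbf{z}\mathbf{T} = (\mathbf{z}^*\mid\mathbf{0})$.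
   Context: The rank weight $\|\mathbf{y}\|_q$ of a vector with entries in an extension of $\mathbb{F}_q$ is the dimension of the $\mathbb{F}_q$-span of its entries. Maps (trace, Frobenius) are applied componentwise to vectors. $\mathcal{G}_k(\mathbf{g})$ denotes the Gabidulin code, the $\mathbb{F}_{q^m}$-span of the rows $(g_1^{q^{i}},\dots,g_n^{q^{i}})$, $i=0,\dots,k-1$. For a subspace $U\subseteq\mathbb{F}_{q^m}^n$, $U^{q^j}=\{(u_1^{q^j},\dots,u_n^{q^j}):\mathbf{u}\in U\}$ and $\Lambda_i(U) = U+U^q+\cdots+U^{q^i}$. The dual of a code $\mathcal{C}\subseteq\mathbb{F}_{q^m}^n$ is $\mathcal{C}^\perp=\{\mathbf{y}\in\mathbb{F}_{q^m}^n : \sum_{j=1}^n c_jy_j = 0 \text{ for all } \mathbf{c}\in\mathcal{C}\}$. $(\mathbf{a}\mid\mathbf{b})$ denotes concatenation. *)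

(* F = F_q (a finite field), L a finite-dimensional field
   extension of F (hence a finite field), E : {subfield L} plays F_{q^m}. *)
From HB Require Import structures.
From mathcomp Require Import all_boot all_order all_algebra all_field.
Set Implicit Arguments. Unset Strict Implicit. Unset Printing Implicit Defensive.
Import GRing.Theory.
Local Open Scope ring_scope.

Section Defs.
Variables (F : finFieldType) (L : fieldExtType F).

Definition qF : nat := #|F|.

Definition entries n (v : 'rV[L]_n) : seq L := [seq v 0 j | j <- enum 'I_n].

Definition rank_weight n (v : 'rV[L]_n) : nat := \dim <<entries v>>%VS.

Definition rv_nth n (v : 'rV[L]_n) (i : nat) : L :=
  if insub i is Some j then v 0 j else 0.

Definition pad_right w n (s : 'rV[L]_w) : 'rV[L]_n := \row_(j < n) rv_nth s j.

Definition pad_left w n (h : 'rV[L]_(n - w)) : 'rV[L]_n :=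
  \row_(j < n) (if (j < w)%N then 0 else rv_nth h (j - w)).

Definition liftF n (P : 'M[F]_n) : 'M[L]_n := map_mx (in_alg L) P.

Definition frobv n (j : nat) (v : 'rV[L]_n) : 'rV[L]_n :=
  map_mx (fun a => a ^+ (qF ^ j)) v.

Definition trace_ext (m u : nat) (a : L) : L := \sum_(i < u) a ^+ (qF ^ (m * i)).

Definition gab_mx k n (g : 'rV[L]_n) : 'M[L]_(k, n) :=
  \matrix_(i < k, j < n) g 0 j ^+ (qF ^ i).

Variable E : {subfield L}.

Definition inFqm n (v : 'rV[L]_n) : Prop := forall j, v 0 j \in E.

Definition Espan (I : finType) n (vs : I -> 'rV[L]_n) : 'rV[L]_n -> Prop :=
  fun v => exists c : I -> L, (forall i, c i \in E) /\ v = \sum_i c i *: vs i.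

Definition sumset n (U V : 'rV[L]_n -> Prop) : 'rV[L]_n -> Prop :=
  fun v => exists a b, U a /\ V b /\ v = a + b.

Definition Lambda n (f : nat) (U : 'rV[L]_n -> Prop) : 'rV[L]_n -> Prop :=
  fun v => exists us : 'I_f.+1 -> 'rV[L]_n,
    (forall j, U (us j)) /\ v = \sum_(j < f.+1) frobv j (us j).

Definition dual n (U : 'rV[L]_n -> Prop) : 'rV[L]_n -> Prop :=
  fun y => inFqm y /\ forall c, U c -> \sum_(j < n) c 0 j * y 0 j = 0.

Definition has_dimE n (U : 'rV[L]_n -> Prop) (d : nat) : Prop :=
  exists b : 'I_d -> 'rV[L]_n,
    [/\ forall i, U (b i), forall i, inFqm (b i),
        (forall c : 'I_d -> L, (forall i, c i \in E) ->
           \sum_i c i *: b i = 0 -> forall i, c i = 0)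
      & forall v, U v <-> Espan b v].

Definition basis_over (u : nat) (b : 'I_u -> L) : Prop :=
  (forall c : 'I_u -> L, (forall i, c i \in E) ->
     \sum_i c i * b i = 0 -> forall i, c i = 0) /\
  (forall y : L, exists c : 'I_u -> L, (forall i, c i \in E) /\ y = \sum_i c i * b i).

End Defs.
Arguments pad_left {F L} w n h.

(* Every Frobenius power of a word of C_pub has the form
   sum_l mu_l g^[l] + beta P^-1 with beta supported on the first w coordinates,
   while Lambda_f(C_pub) contains g^[0], ..., g^[n-w-2] and Lambda_f(B) P^-1;
   as dim Lambda_f(B) = w, the latter is (F_q^m^w | 0) P^-1.  Hence y lies in
   the dual iff y P^-T = (0 | h) with h orthogonal to the first n-w-1 Frobenius
   powers of the tail a of g P, whose entries are F_q-independent.  The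
   solutions of this Moore system form a line spanned by a vector with
   F_q-independent entries; the line is stable under x |-> x^(q^m), so it has a
   generator over F_q^m.  For (2), if ht T^-T also vanishes on the first w
   coordinates, the independence of the entries of h forces T^-1 P to be block
   lower triangular, and then z T = (s | 0) P^-1 T is again supported on the
   first w coordinates, with the rank weight of s. *)

From HB Require Import structures.
From mathcomp Require Import all_boot all_order all_algebra all_field.
From mathcomp Require Import zify.
Set Implicit Arguments. Unset Strict Implicit. Unset Printing Implicit Defensive.
Import GRing.Theory.
Local Open Scope ring_scope.

(** * Frobenius powers *)

Section Frobenius.
Variables (F : finFieldType) (L : fieldExtType F).
Local Notation q := (qF F).

Lemma qF_gt1 : (1 < q)%N.
Proof. exact: finNzRing_gt1. Qed.

Lemma exprqB (a b : L) : (a - b) ^+ q = a ^+ q - b ^+ q.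
Proof.
rewrite /qF; have [p _ pcharFp] := finPcharP F; rewrite (card_pprimeChar pcharFp).
have pcharLp : p \in [pchar L] by rewrite (pchar_lalg L).
elim: (logn _ _) => // e IHe; rewrite expnSr !exprM {}IHe.
by rewrite -(pFrobenius_autE pcharLp) rmorphB.
Qed.

Definition frob (j : nat) (a : L) := a ^+ (q ^ j).

Lemma frob_is_zmod_morphism j : zmod_morphism (frob j).
Proof.
rewrite /frob; elim: j => [|j IHj] a b; first by rewrite !expn0 !expr1.
by rewrite expnSr !exprM IHj exprqB.
Qed.

Lemma frob_is_monoid_morphism j : monoid_morphism (frob j).
Proof. by rewrite /frob; split=> [|a b]; rewrite ?expr1n ?exprMn. Qed.

HB.instance Definition _ j :=
  GRing.isZmodMorphism.Build _ _ (frob j) (frob_is_zmod_morphism j).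
HB.instance Definition _ j :=
  GRing.isMonoidMorphism.Build _ _ (frob j) (frob_is_monoid_morphism j).

Lemma frob_alg j (c : F) : frob j c%:A = c%:A.
Proof.
rewrite /frob; elim: j => [|j IHj]; first by rewrite expn0 expr1.
by rewrite expnSr exprM IHj -[LHS](rmorphXn (in_alg L)) /qF expf_card.
Qed.

Lemma frobZ j (c : F) (a : L) : frob j (c *: a) = c *: frob j a.
Proof. by rewrite -mulr_algl rmorphM /= frob_alg mulr_algl. Qed.

Lemma frob_frob i j (a : L) : frob i (frob j a) = frob (j + i) a.
Proof. by rewrite /frob -exprM expnD. Qed.

Lemma frob0_id (a : L) : frob 0 a = a.
Proof. by rewrite /frob expn0 expr1. Qed.

Lemma frobvE n j (v : 'rV[L]_n) : frobv j v = map_mx (frob j) v.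
Proof. by []. Qed.

End Frobenius.

(** * Moore systems *)

Section Moore.
Variables (F : finFieldType) (L : fieldExtType F).
Local Notation q := (qF F).
Local Notation frob := (@frob F L).

Definition Ffree r (a : 'I_r -> L) :=
  forall lam : 'I_r -> F, \sum_j lam j *: a j = 0 -> forall j, lam j = 0.

Definition moore_mx p r (a : 'I_r -> L) : 'M[L]_(p, r) :=
  \matrix_(i < p, j < r) frob i (a j).

Lemma coef_linearized r (c : 'I_r -> L) (i0 : 'I_r) :
  (\sum_(i < r) c i *: 'X^(q ^ i) : {poly L})`_(q ^ i0) = c i0.
Proof.
rewrite coef_sum (bigD1 i0) //= coefZ coefXn eqxx mulr1 big1 ?addr0 // => i ne_i.
rewrite coefZ coefXn eqn_exp2l ?qF_gt1 //.
by case: eqP => [/val_inj ei|]; [rewrite ei eqxx in ne_i | rewrite mulr0].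
Qed.

(* The q-polynomial with coefficients v vanishes on the q^r distinct F-linear
   combinations of the a_j but has degree at most q^(r-1). *)
Lemma moore_row_free r (a : 'I_r -> L) : Ffree a -> row_free (moore_mx r a).
Proof.
move=> free_a; apply: inj_row_free => v vM0.
pose p : {poly L} := \sum_(i < r) v 0 i *: 'X^(q ^ i).
suff p0 : p = 0 by apply/rowP => i; rewrite -(coef_linearized _ i) -/p p0 coef0 mxE.
apply/eqP; apply: contraT => pnz.
have r_gt0 : (0 < r)%N.
  apply: contraNT pnz; rewrite -eqn0Ngt => /eqP r0.
  by rewrite /p big1 // => i; have := ltn_ord i; rewrite {2}r0.
pose comb (lam : {ffun 'I_r -> F}) := \sum_j lam j *: a j.
have root_comb lam : root p (comb lam).
  rewrite /root /p horner_sum (eq_bigr (fun i => v 0 i * frob i (comb lam))); last first.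
    by move=> i _; rewrite hornerZ hornerXn.
  rewrite (eq_bigr (fun i => \sum_j lam j *: (v 0 i * frob i (a j)))); last first.
    move=> i _; rewrite rmorph_sum /= mulr_sumr; apply: eq_bigr => j _.
    by rewrite frobZ scalerAr.
  rewrite exchange_big big1 //= => j _.
  have := congr1 (fun M : 'rV_r => M 0 j) vM0; rewrite !mxE => vMj.
  rewrite -scaler_sumr (eq_bigr (fun i => v 0 i * moore_mx r a i j)) ?vMj ?scaler0 //.
  by move=> i _; rewrite mxE.
have comb_inj : injective comb.
  move=> l1 l2 el; apply/ffunP => j; apply/eqP; rewrite -subr_eq0; apply/eqP.
  move: j; apply: free_a; rewrite (eq_bigr (fun j => l1 j *: a j - l2 j *: a j)).
    by rewrite sumrB -/(comb l1) -/(comb l2) el subrr.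
  by move=> j _; rewrite scalerBl.
have size_p : (size p <= (q ^ r.-1).+1)%N.
  apply: leq_trans (size_sum _ _ _) _; apply/bigmax_leqP => i _.
  apply: leq_trans (size_scale_leq _ _) _.
  by rewrite size_polyXn ltnS leq_exp2l ?qF_gt1 // -ltnS prednK.
have all_roots : all (root p) [seq comb lam | lam <- enum {ffun 'I_r -> F}].
  by apply/allP => _ /mapP[lam _ ->]; apply: root_comb.
have := max_poly_roots pnz all_roots.
rewrite map_inj_uniq ?enum_uniq // size_map -cardE card_ffun card_ord.
move=> /(_ isT) /leq_trans /(_ size_p).
by rewrite ltnS leq_exp2l ?qF_gt1 // -ltnS prednK // ltnn.
Qed.

Lemma moore_unitmx r (a : 'I_r -> L) : Ffree a -> moore_mx r a \in unitmx.
Proof. by move=> free_a; rewrite -row_free_unit moore_row_free. Qed.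

Definition moore_ker p r (a h : 'I_r -> L) :=
  forall i : 'I_p, \sum_j h j * frob i (a j) = 0.

Lemma moore_ker_square r (a h : 'I_r -> L) :
  Ffree a -> moore_ker r a h -> forall j, h j = 0.
Proof.
move=> free_a hker j.
have hM0 : moore_mx r a *m \col_j h j = 0.
  apply/colP => i; rewrite !mxE; apply: etrans (hker i).
  by apply: eq_bigr => j' _; rewrite !mxE mulrC.
have := congr1 (fun V : 'cV_r => V j 0) (mulKmx (moore_unitmx free_a) (\col_j h j)).
by rewrite hM0 mulmx0 !mxE.
Qed.

Lemma moore_ker_exists p r (a : 'I_r -> L) : (p < r)%N ->
  exists2 h : 'I_r -> L, (exists j, h j != 0) & moore_ker p a h.
Proof.
move=> lt_pr; pose A := (moore_mx p a)^T.
have : kermx A != 0.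
  by rewrite kermx_eq0 /row_free ltn_eqF // (leq_ltn_trans (rank_leq_col A) lt_pr).
case/rowV0Pn => v /sub_kermxP vA0 /rV0Pn[j vj_neq0].
exists (fun j => v 0 j); first by exists j.
move=> i; have := congr1 (fun M : 'rV_p => M 0 i) vA0; rewrite !mxE => vAi.
by rewrite -[RHS]vAi; apply: eq_bigr => j' _; rewrite !mxE.
Qed.

Lemma Ffree_lift r (a : 'I_r -> L) (j0 : 'I_r) (d : 'I_r.-1 -> F) :
  Ffree a -> Ffree (fun j => a (lift j0 j) - d j *: a j0).
Proof.
move=> free_a mu hmu j.
pose lam j' := if unlift j0 j' is Some j then mu j else - \sum_k mu k * d k.
have : \sum_j lam j *: a j = 0.
  rewrite (bigD1_ord j0) //= /lam unlift_none.
  rewrite (eq_bigr (fun k => mu k *: a (lift j0 k))); last by move=> k _; rewrite liftK.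
  rewrite addrC scaleNr -[RHS]hmu scaler_suml -sumrB.
  by apply: eq_bigr => k _; rewrite scalerBr scalerA.
by move=> /free_a /(_ (lift j0 j)); rewrite /lam liftK.
Qed.

Lemma moore_ker_lift p r (a h : 'I_r -> L) (j0 : 'I_r) :
  moore_ker p a h -> h j0 = 0 ->
  moore_ker p (fun j => a (lift j0 j)) (fun j => h (lift j0 j)).
Proof. by move=> hker hj0 i; have := hker i; rewrite (bigD1_ord j0) //= hj0 mul0r add0r. Qed.

Lemma moore_ker_line r (a h h' : 'I_r -> L) (j0 : 'I_r) : Ffree a ->
  moore_ker r.-1 a h -> moore_ker r.-1 a h' -> h j0 != 0 ->
  forall j, h' j = h' j0 / h j0 * h j.
Proof.
move=> free_a hker hker' hj0; set c := h' j0 / h j0.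
pose v j := h' j - c * h j.
have vker : moore_ker r.-1 a v.
  move=> i; rewrite (eq_bigr (fun j => h' j * frob i (a j) - c * (h j * frob i (a j)))).
    by rewrite sumrB -mulr_sumr hker hker' mulr0 subrr.
  by move=> j _; rewrite /v mulrBl mulrA.
have free_lift : Ffree (fun j => a (lift j0 j)).
  move=> mu hmu; apply: (Ffree_lift (j0 := j0) (d := fun=> 0) free_a); rewrite -[RHS]hmu.
  by apply: eq_bigr => j _; rewrite scale0r subr0.
have v_lift0 : forall j, v (lift j0 j) = 0.
  by apply: moore_ker_square free_lift (moore_ker_lift vker _); rewrite /v /c divfK ?subrr.
move=> j; apply/eqP; rewrite -subr_eq0; apply/eqP; rewrite -/(v j).
case: (unliftP j0 j) => [j'|] ->; first exact: v_lift0.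
by rewrite /v /c divfK ?subrr.
Qed.

(* If sum_j lam_j h_j = 0 with lam_j0 <> 0, the remaining entries of h solve
   the square Moore system of the free family
   a_(lift j0 j) - (lam_(lift j0 j) / lam_j0) a_j0. *)
Lemma moore_ker_free r (a h : 'I_r -> L) : Ffree a ->
  (exists j, h j != 0) -> moore_ker r.-1 a h -> Ffree h.
Proof.
move=> free_a [j1 hj1_neq0] hker lam hlam j0; apply/eqP; apply: contraT => lam_j0.
pose d j := lam (lift j0 j) / lam j0.
have sum_dh : \sum_j d j *: h (lift j0 j) = - h j0.
  move: hlam; rewrite (bigD1_ord j0) //= => /eqP; rewrite addrC addr_eq0 => /eqP hsum.
  rewrite (eq_bigr (fun j => (lam j0)^-1 *: (lam (lift j0 j) *: h (lift j0 j)))).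
    by rewrite -scaler_sumr hsum scalerN scalerA mulVf // scale1r.
  by move=> j _; rewrite scalerA /d mulrC.
have hker' : moore_ker r.-1 (fun j => a (lift j0 j) - d j *: a j0)
                            (fun j => h (lift j0 j)).
  move=> i; rewrite (eq_bigr (fun j => h (lift j0 j) * frob i (a (lift j0 j))
                            - (d j *: h (lift j0 j)) * frob i (a j0))); last first.
    by move=> j _; rewrite rmorphB /= frobZ mulrBr -scalerAr -scalerAl.
  rewrite sumrB -mulr_suml sum_dh mulNr opprK addrC.
  by have := hker i; rewrite (bigD1_ord j0).
have h_lift0 := moore_ker_square (Ffree_lift free_a) hker'.
have h_j0 : h j0 = 0.
  by rewrite -[h j0]opprK -sum_dh big1 ?oppr0 // => j _; rewrite h_lift0 scaler0.
by move: hj1_neq0; case: (unliftP j0 j1) => [j|] ->; rewrite ?h_lift0 ?h_j0 eqxx.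
Qed.

End Moore.

Section RowVectors.
Variables (F : finFieldType) (L : fieldExtType F).
Local Notation frob := (@frob F L).
Implicit Types (n w : nat).

Lemma entriesE n (v : 'rV[L]_n) : entries v = [tuple v 0 j | j < n] :> seq L.
Proof.
rewrite /entries -[RHS]map_tnth_enum.
by apply: eq_map => j; rewrite tnth_mktuple.
Qed.

Lemma rank_weight_full n (v : 'rV[L]_n) :
  rank_weight v = n <-> Ffree (fun j => v 0 j).
Proof.
rewrite /rank_weight entriesE; split => [dim_v | free_v].
  have /freeP free_t : free [tuple v 0 j | j < n] by rewrite /free size_tuple dim_v.
  move=> lam hlam; apply: free_t; rewrite -[RHS]hlam; apply: eq_bigr => j _.
  by rewrite -tnth_nth tnth_mktuple.
apply/eqP; rewrite -[X in _ == X](size_tuple [tuple v 0 j | j < n]).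
apply/freeP => lam hlam; apply: free_v; rewrite -[RHS]hlam; apply: eq_bigr => j _.
by rewrite -tnth_nth tnth_mktuple.
Qed.

Lemma rank_weight_le n (v : 'rV[L]_n) : (rank_weight v <= n)%N.
Proof.
by rewrite (leq_trans (dim_span _)) // /entries size_map size_enum_ord.
Qed.

Lemma rv_nthE n (v : 'rV[L]_n) (j : 'I_n) : rv_nth v j = v 0 j.
Proof. by rewrite /rv_nth valK. Qed.

Lemma rv_nth_lt n (v : 'rV[L]_n) j (lt_jn : (j < n)%N) :
  rv_nth v j = v 0 (Ordinal lt_jn).
Proof. by rewrite -rv_nthE. Qed.

Lemma rv_nth_out n (v : 'rV[L]_n) j : (n <= j)%N -> rv_nth v j = 0.
Proof. by move=> le_nj; rewrite /rv_nth insubN // -leqNgt. Qed.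

Lemma rv_nth_map n (f : {additive L -> L}) (v : 'rV[L]_n) j :
  rv_nth (map_mx f v) j = f (rv_nth v j).
Proof. by rewrite /rv_nth; case: insubP => [j' _ _|_]; rewrite ?mxE ?raddf0. Qed.

Lemma rv_nthZ n c (v : 'rV[L]_n) j : rv_nth (c *: v) j = c * rv_nth v j.
Proof. by rewrite /rv_nth; case: insubP => [j' _ _|_]; rewrite ?mxE ?mulr0. Qed.

Lemma rv_nth_in_span n (v : 'rV[L]_n) j : rv_nth v j \in <<entries v>>%VS.
Proof.
rewrite /rv_nth; case: insub => [j'|]; last exact: rpred0.
by apply: memv_span; apply: map_f; rewrite mem_enum.
Qed.

Definition dot n (u v : 'rV[L]_n) := \sum_(j < n) u 0 j * v 0 j.

Lemma dotE n (u v : 'rV[L]_n) : dot u v = (u *m v^T) 0 0.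
Proof. by rewrite mxE; apply: eq_bigr => j _; rewrite mxE. Qed.

Lemma dot_mulmx n (u v : 'rV[L]_n) (A : 'M[L]_n) : dot (u *m A) v = dot u (v *m A^T).
Proof. by rewrite !dotE trmx_mul trmxK mulmxA. Qed.

Lemma dotDl n (u1 u2 v : 'rV[L]_n) : dot (u1 + u2) v = dot u1 v + dot u2 v.
Proof. by rewrite !dotE mulmxDl mxE. Qed.

Lemma dotZl n c (u v : 'rV[L]_n) : dot (c *: u) v = c * dot u v.
Proof. by rewrite !dotE -scalemxAl mxE. Qed.

Lemma dotZr n c (u v : 'rV[L]_n) : dot u (c *: v) = c * dot u v.
Proof. by rewrite !dotE linearZ /= -scalemxAr mxE. Qed.

Lemma dot_suml n (I : finType) (us : I -> 'rV[L]_n) v :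
  dot (\sum_i us i) v = \sum_i dot (us i) v.
Proof. by rewrite dotE mulmx_suml summxE; apply: eq_bigr => i _; rewrite dotE. Qed.

Definition head_supp w n (v : 'rV[L]_n) := forall j : 'I_n, (w <= j)%N -> v 0 j = 0.

Lemma head_supp_pad w n (a : 'rV[L]_w) : head_supp w (pad_right n a).
Proof. by move=> j le_wj; rewrite mxE rv_nth_out. Qed.

Lemma head_supp_sum w n (I : finType) (c : I -> L) (vs : I -> 'rV[L]_n) :
  (forall i, head_supp w (vs i)) -> head_supp w (\sum_i c i *: vs i).
Proof.
by move=> hvs j le_wj; rewrite summxE big1 // => i _; rewrite mxE hvs ?mulr0.
Qed.

Lemma head_supp_frobv w n j (v : 'rV[L]_n) :
  head_supp w v -> head_supp w (frobv j v).
Proof. by move=> hv t le_wt; rewrite frobvE mxE hv // rmorph0. Qed.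

Definition tail_supp w n (v : 'rV[L]_n) := forall j : 'I_n, (j < w)%N -> v 0 j = 0.

Lemma dot_head_tail_supp w n (b y : 'rV[L]_n) :
  head_supp w b -> tail_supp w y -> dot b y = 0.
Proof.
move=> hb hy; rewrite /dot big1 // => j _.
by case: (ltnP j w) => [lt_jw|le_wj]; [rewrite hy ?mulr0 | rewrite hb ?mul0r].
Qed.

Lemma dot_head_supp w n (b v : 'rV[L]_n) : (w <= n)%N -> head_supp w b ->
  dot b v = \sum_(t < w) rv_nth b t * rv_nth v t.
Proof.
move=> le_wn hb; pose G j := rv_nth b j * rv_nth v j.
rewrite /dot (eq_bigr (fun j : 'I_n => G j)); last by move=> j _; rewrite /G !rv_nthE.
rewrite -(big_mkord xpredT G) (@big_cat_nat _ _ _ w 0 n _ _ (leq0n w) le_wn) /= big_mkord.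
rewrite [X in _ + X]big1_seq ?addr0 // => j /andP[_]; rewrite mem_iota subnKC //.
by case/andP=> le_wj lt_jn; rewrite /G (rv_nth_lt _ lt_jn) hb ?mul0r.
Qed.

Lemma dot_pad_left w n (v : 'rV[L]_n) (h : 'rV[L]_(n - w)) : (w <= n)%N ->
  dot v (pad_left w n h) = \sum_(t < n - w) rv_nth v (w + t) * h 0 t.
Proof.
move=> le_wn.
pose G j := rv_nth v j * (if (j < w)%N then 0 else rv_nth h (j - w)).
rewrite /dot (eq_bigr (fun j : 'I_n => G j)); last by move=> j _; rewrite mxE /G rv_nthE.
rewrite -(big_mkord xpredT G) (@big_cat_nat _ _ _ w 0 n _ _ (leq0n w) le_wn) /= big1_seq ?add0r.
  rewrite -{1}(add0n w) big_addn big_mkord; apply: eq_bigr => t _.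
  by rewrite /G addnC ltnNge leq_addr /= addKn rv_nthE.
by move=> j /andP[_]; rewrite mem_iota add0n subn0 => /andP[_ lt_jw]; rewrite /G lt_jw mulr0.
Qed.

Lemma pad_right_head w n (v : 'rV[L]_n) : head_supp w v ->
  v = pad_right n (\row_(t < w) rv_nth v t).
Proof.
move=> hv; apply/rowP => j; rewrite mxE; case: (ltnP j w) => [lt_jw|le_wj].
  by rewrite (rv_nth_lt _ lt_jw) mxE rv_nthE.
by rewrite rv_nth_out // hv.
Qed.

Lemma pad_left_tail w n (v : 'rV[L]_n) : (w <= n)%N -> tail_supp w v ->
  v = pad_left w n (\row_(t < n - w) rv_nth v (w + t)).
Proof.
move=> le_wn hv; apply/rowP => j; rewrite mxE; case: ifP => [/hv //|/negbT].
rewrite -leqNgt => le_wj; have lt_jw_nw : (j - w < n - w)%N by have := ltn_ord j; lia.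
by rewrite (rv_nth_lt _ lt_jw_nw) mxE subnKC // rv_nthE.
Qed.

Lemma pad_leftZ w n c (h : 'rV[L]_(n - w)) :
  pad_left w n (c *: h) = c *: pad_left w n h.
Proof. by apply/rowP => j; rewrite !mxE; case: ifP; rewrite ?mulr0 // rv_nthZ. Qed.

Lemma map_liftF (f : {rmorphism L -> L}) n (P : 'M[F]_n) :
  (forall c : F, f c%:A = c%:A) -> map_mx f (liftF L P) = liftF L P.
Proof. by move=> f_alg; apply/matrixP => i j; rewrite !mxE f_alg. Qed.

Lemma frobvD n j (v1 v2 : 'rV[L]_n) : frobv j (v1 + v2) = frobv j v1 + frobv j v2.
Proof. by rewrite !frobvE map_mxD. Qed.

Lemma frobvZ n j c (v : 'rV[L]_n) : frobv j (c *: v) = frob j c *: frobv j v.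
Proof. by rewrite !frobvE map_mxZ. Qed.

Lemma frobv_sum n j (I : finType) (vs : I -> 'rV[L]_n) :
  frobv j (\sum_i vs i) = \sum_i frobv j (vs i).
Proof.
apply/rowP => t; rewrite !frobvE !mxE summxE rmorph_sum summxE.
by apply: eq_bigr => i _; rewrite mxE.
Qed.

Lemma frobv_liftF n j (v : 'rV[L]_n) (P : 'M[F]_n) :
  frobv j (v *m liftF L P) = frobv j v *m liftF L P.
Proof. by rewrite !frobvE map_mxM map_liftF // => c; apply: frob_alg. Qed.

Lemma frobv_frobv n i j (v : 'rV[L]_n) : frobv i (frobv j v) = frobv (j + i) v.
Proof. by apply/rowP => t; rewrite !frobvE !mxE frob_frob. Qed.

Lemma Ffree_mulmx_liftF n (v : 'rV[L]_n) (P : 'M[F]_n) : P \in unitmx ->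
  Ffree (fun j => v 0 j) -> Ffree (fun j => (v *m liftF L P) 0 j).
Proof.
move=> P_unit free_v lam hlam.
have P_lam0 : P *m \col_j lam j = 0.
  apply/colP => l; rewrite !mxE; move: l; apply: free_v; rewrite -[RHS]hlam.
  rewrite (eq_bigr (fun l => \sum_j (P l j * lam j) *: v 0 l)); last first.
    by move=> l _; rewrite scaler_suml; apply: eq_bigr => j _; rewrite !mxE.
  rewrite exchange_big; apply: eq_bigr => j _; rewrite !mxE scaler_sumr.
  by apply: eq_bigr => l _; rewrite mxE /= mulr_algr scalerA mulrC.
move=> j; have := mulKmx P_unit (\col_j lam j); rewrite P_lam0 mulmx0 => /colP/(_ j).
by rewrite !mxE.
Qed.

Lemma Ffree_tail w n (v : 'rV[L]_n) : (w <= n)%N -> Ffree (fun j => v 0 j) ->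
  Ffree (fun t : 'I_(n - w) => rv_nth v (w + t)).
Proof.
move=> le_wn free_v lam hlam t.
pose h : 'rV[L]_(n - w) := \row_t (lam t)%:A.
pose lam' (j : 'I_n) := if (j < w)%N then 0 else
  if insub (j - w)%N is Some t then lam t else 0.
have lam'E j : (lam' j)%:A = pad_left w n h 0 j :> L.
  rewrite mxE /lam'; case: ifP => _; first by rewrite scale0r.
  by rewrite /rv_nth; case: insub => [t'|]; rewrite ?mxE ?scale0r.
have : \sum_j lam' j *: v 0 j = 0.
  rewrite -[RHS]hlam; apply: etrans (_ : dot v (pad_left w n h) = _).
    by apply: eq_bigr => j _; rewrite -mulr_algr lam'E.
  by rewrite dot_pad_left //; apply: eq_bigr => t' _; rewrite mxE mulr_algr.
have lt_wt_n : (w + t < n)%N by rewrite -ltn_subRL.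
move=> /free_v /(_ (Ordinal lt_wt_n)); rewrite /lam' /= ltnNge leq_addr /= addKn.
by case: insubP => [t' _ /val_inj -> //|]; rewrite ltn_ord.
Qed.

End RowVectors.

Section BlockLowerTriangular.
Variable K : fieldType.

Lemma pid_mulmxE n w (M : 'M[K]_n) i j : (pid_mx w *m M) i j = (i < w)%:R * M i j.
Proof.
rewrite mxE (bigD1 i) //= big1 ?addr0 => [|k ne_ki]; first by rewrite mxE eqxx.
by rewrite mxE eq_sym (negbTE (ne_ki : k != i :> nat)) mul0r.
Qed.

Lemma mulmx_pidE n w (M : 'M[K]_n) i j : (M *m pid_mx w) i j = M i j * (j < w)%:R.
Proof.
rewrite mxE (bigD1 j) //= big1 ?addr0 => [|k ne_kj]; first by rewrite mxE eqxx.
by rewrite mxE (negbTE (ne_kj : k != j :> nat)) mulr0.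
Qed.

(* The rows of index < w span the coordinate space of pid_mx w, which M maps
   into itself, hence onto itself by a rank count. *)
Lemma invmx_block_lower n w (M : 'M[K]_n) : M \in unitmx ->
  (forall l j : 'I_n, (l < w)%N -> (w <= j)%N -> M l j = 0) ->
  forall l j : 'I_n, (l < w)%N -> (w <= j)%N -> invmx M l j = 0.
Proof.
move=> M_unit M_low; set U := pid_mx w : 'M[K]_n.
have UM_U : (U *m M <= U)%MS.
  suff -> : U *m M = (U *m M) *m U by exact: submxMl.
  apply/matrixP => i j; rewrite mulmx_pidE !pid_mulmxE.
  case: (ltnP i w) => hi; case: (ltnP j w) => hj; rewrite ?mul0r ?mulr1 //.
  by rewrite M_low // !mulr0.
have U_UM : (U <= U *m M)%MS.
  by rewrite -(mxrank_leqif_sup UM_U).2 mxrankMfree ?row_free_unit.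
have := submxMr (invmx M) U_UM; rewrite mulmxK // => /submxP[D UD] l j lt_lw le_wj.
have := congr1 (fun A : 'M_n => A l j) UD; rewrite pid_mulmxE mulmx_pidE lt_lw mul1r.
by rewrite ltnNge le_wj mulr0.
Qed.

End BlockLowerTriangular.

Section LiftedMatrices.
Variables (F : finFieldType) (L : fieldExtType F).
Implicit Types (n w : nat).

Lemma liftF_invmx n (P : 'M[F]_n) : liftF L (invmx P) = invmx (liftF L P).
Proof. exact: map_invmx. Qed.

Lemma liftF_unitmx n (P : 'M[F]_n) : (liftF L P \in unitmx) = (P \in unitmx).
Proof. exact: map_unitmx. Qed.

Lemma trmx_liftF n (P : 'M[F]_n) : (liftF L P)^T = liftF L P^T.
Proof. exact: map_trmx. Qed.

Lemma liftF1 n : liftF L (1%:M : 'M[F]_n) = 1%:M.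
Proof. exact: map_mx1. Qed.

Lemma liftF_mul n (P Q : 'M[F]_n) : liftF L (P *m Q) = liftF L P *m liftF L Q.
Proof. exact: map_mxM. Qed.

Lemma head_supp_mulmx_liftF w n (v : 'rV[L]_n) (N : 'M[F]_n) :
  (forall l j : 'I_n, (l < w)%N -> (w <= j)%N -> N l j = 0) ->
  head_supp w v -> head_supp w (v *m liftF L N).
Proof.
move=> N_low hv j le_wj; rewrite mxE big1 // => l _; rewrite mxE.
by case: (ltnP l w) => [lt_lw|le_wl]; [rewrite N_low ?rmorph0 ?mulr0 | rewrite hv ?mul0r].
Qed.

Lemma rank_weight_pad_right_le w n (a b : 'rV[L]_w) (Q : 'M[F]_n) : (w <= n)%N ->
  pad_right n a = pad_right n b *m liftF L Q -> (rank_weight a <= rank_weight b)%N.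
Proof.
move=> le_wn ab; apply: dimvS; apply/span_subvP => _ /mapP[t _ ->].
have lt_tn : (t < n)%N := leq_trans (ltn_ord t) le_wn.
have := congr1 (fun v : 'rV_n => v 0 (Ordinal lt_tn)) ab; rewrite !mxE rv_nthE => ->.
apply: rpred_sum => j _; rewrite !mxE mulr_algr; apply: rpredZ.
exact: rv_nth_in_span.
Qed.

(* ((0 | h) M^T)_l = sum_t M_(l, w + t) h_t is an F-linear relation between
   the entries of h. *)
Lemma pad_left_liftF_head w n (h : 'rV[L]_(n - w)) (M : 'M[F]_n) (l : 'I_n) :
  (w <= n)%N -> Ffree (fun t => h 0 t) ->
  (pad_left w n h *m (liftF L M)^T) 0 l = 0 ->
  forall j : 'I_n, (w <= j)%N -> M l j = 0.
Proof.
move=> le_wn free_h hl0 j le_wj.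
pose Ml j' := if insub j' is Some j'' then M l j'' else 0.
have row_l0 : dot (row l (liftF L M)) (pad_left w n h) = 0.
  by rewrite -[RHS]hl0 mxE; apply: eq_bigr => j' _; rewrite !mxE mulrC.
have : \sum_(t < n - w) Ml (w + t)%N *: h 0 t = 0.
  rewrite -[RHS]row_l0 dot_pad_left //; apply: eq_bigr => t _.
  by rewrite /rv_nth /Ml; case: insub => [j''|]; rewrite ?mxE ?scale0r ?mul0r // mulr_algl.
have lt_jw_nw : (j - w < n - w)%N by have := ltn_ord j; lia.
move=> /free_h /(_ (Ordinal lt_jw_nw)); rewrite /Ml /= subnKC //.
by case: insubP => [j'' _ /val_inj <- //|]; rewrite ltn_ord.
Qed.

End LiftedMatrices.

(** * The subfield F_q^m *)

Lemma subfield_unitmx (F : fieldType) (L : fieldExtType F) (E : {subfield L})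
    w (M : 'M[L]_w) :
  (forall i j, M i j \in E) ->
  (forall c : 'I_w -> L, (forall i, c i \in E) ->
     (forall j, \sum_i c i * M i j = 0) -> forall i, c i = 0) ->
  M \in unitmx.
Proof.
move=> ME free_M.
have -> : M = map_mx vsval (map_mx (vsproj E) M).
  by apply/matrixP => i j; rewrite !mxE vsprojK.
rewrite map_unitmx -row_free_unit; apply: inj_row_free => v vM0.
apply/rowP => i; apply: subvs_inj; rewrite mxE linear0.
apply: (free_M (fun i => vsval (v 0 i))) => [i'|j]; first exact: subvsP.
have := congr1 (fun A : 'rV_w => vsval (A 0 j)) vM0; rewrite !mxE linear0 => vM0j.
rewrite -[RHS]vM0j rmorph_sum; apply: eq_bigr => i' _.
by rewrite rmorphM /= !mxE vsprojK.
Qed.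

Section Trace.
Variables (F : finFieldType) (L : fieldExtType F) (m u : nat).
Local Notation Tr := (@trace_ext F L m u).
Local Notation frob := (@frob F L).
Implicit Types a e : L.

Lemma trace_extE a : Tr a = \sum_(i < u) frob (m * i) a.
Proof. by []. Qed.

Lemma trace_ext_is_zmod_morphism : zmod_morphism Tr.
Proof.
by move=> a b; rewrite !trace_extE -sumrB; apply: eq_bigr => i _; rewrite rmorphB.
Qed.

HB.instance Definition _ :=
  GRing.isZmodMorphism.Build L L Tr trace_ext_is_zmod_morphism.

Lemma trace_extZ (c : F) a : Tr (c *: a) = c *: Tr a.
Proof. by rewrite !trace_extE scaler_sumr; apply: eq_bigr => i _; rewrite frobZ. Qed.

Variable E : {subfield L}.
Hypotheses (dimE : \dim E = m) (dimL : \dim {:L} = (m * u)%N).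

Lemma mem_subfield_frob a : (a \in E) = (frob m a == a).
Proof. by rewrite Fermat's_little_theorem dimE. Qed.

Lemma frob_subfield i a : a \in E -> frob (m * i) a = a.
Proof.
move=> aE; elim: i => [|i IHi]; first by rewrite muln0 frob0_id.
by rewrite mulnS addnC -frob_frob IHi; apply/eqP; rewrite -mem_subfield_frob.
Qed.

Lemma trace_extMl e a : e \in E -> Tr (e * a) = e * Tr a.
Proof.
move=> eE; rewrite !trace_extE mulr_sumr; apply: eq_bigr => i _.
by rewrite rmorphM /= frob_subfield.
Qed.

Lemma frob_full a : frob (m * u) a = a.
Proof.
have := Fermat's_little_theorem (fullv : {subfield L}) a.
by rewrite memvf dimL => /esym/eqP.
Qed.

(* frob m shifts the terms of Tr a cyclically, as frob (m * u) is the identity. *)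
Lemma trace_ext_in a : Tr a \in E.
Proof.
rewrite mem_subfield_frob trace_extE rmorph_sum /=; apply/eqP.
rewrite (eq_bigr (fun i : 'I_u => frob (m * i.+1) a)); last first.
  by move=> i _; rewrite frob_frob mulnS addnC.
have recr := @big_ord_recr L 0 +%R u (fun i : 'I_u.+1 => frob (m * i) a).
have recl := @big_ord_recl L 0 +%R u (fun i : 'I_u.+1 => frob (m * i) a).
rewrite /= muln0 frob0_id frob_full in recr recl.
by rewrite recr addrC in recl; move/addrI: recl => ->; apply: eq_bigr.
Qed.

End Trace.

Section SpansOverSubfield.
Variables (F : finFieldType) (L : fieldExtType F) (E : {subfield L}).
Implicit Types (n w : nat).

Lemma rv_nth_inFqm n (v : 'rV[L]_n) t : inFqm E v -> rv_nth v t \in E.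
Proof. by move=> vE; rewrite /rv_nth; case: insub => [t'|]; [exact: vE | exact: rpred0]. Qed.

Lemma inFqm_pad_left w n (h : 'rV[L]_(n - w)) : inFqm E h -> inFqm E (pad_left w n h).
Proof. by move=> hE j; rewrite mxE; case: ifP => _; rewrite ?rpred0 ?rv_nth_inFqm. Qed.

Lemma inFqm_mulmx_liftF n (y : 'rV[L]_n) (Q : 'M[F]_n) :
  inFqm E y -> inFqm E (y *m liftF L Q).
Proof.
move=> yE j; rewrite mxE rpred_sum // => l _.
by rewrite !mxE rpredM //= rpredZ // rpred1.
Qed.

Lemma Espan0 (I : finType) n (vs : I -> 'rV[L]_n) : Espan E vs 0.
Proof.
by exists (fun=> 0); split => [i|]; rewrite ?rpred0 // big1 // => i _; rewrite scale0r.
Qed.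

Lemma Espan_gen (I : finType) n (vs : I -> 'rV[L]_n) i : Espan E vs (vs i).
Proof.
exists (fun i' => (i' == i)%:R); split => [i'|]; first by case: eqP; rewrite ?rpred1 ?rpred0.
rewrite (bigD1 i) //= eqxx scale1r big1 ?addr0 // => i' /negbTE ->.
by rewrite scale0r.
Qed.

Lemma sumset_l n (U V : 'rV[L]_n -> Prop) a : U a -> V 0 -> sumset U V a.
Proof. by move=> Ua V0; exists a, 0; rewrite addr0. Qed.

Lemma Lambda_frobv n f (U : 'rV[L]_n -> Prop) j v :
  (j <= f)%N -> U 0 -> U v -> Lambda f U (frobv j v).
Proof.
rewrite -ltnS => lt_jf U0 Uv; pose j0 := Ordinal lt_jf.
exists (fun j' => if j' == j0 then v else 0); split => [j'|]; first by case: eqP.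
rewrite (bigD1 j0) //= eqxx big1 ?addr0 // => j' /negbTE ->.
by rewrite frobvE map_mx0.
Qed.

Lemma has_dimE_line n (U : 'rV[L]_n -> Prop) (y0 : 'rV[L]_n) :
  inFqm E y0 -> y0 != 0 -> (forall y, U y <-> exists c, c \in E /\ y = c *: y0) ->
  has_dimE E U 1.
Proof.
move=> y0E y0_neq0 UE; exists (fun=> y0); split.
- by move=> _; apply/UE; exists 1; rewrite rpred1 scale1r.
- by [].
- move=> c _; rewrite big_ord1 => /eqP; rewrite scaler_eq0 (negbTE y0_neq0) orbF.
  by move=> /eqP c0 i; rewrite (ord1 i).
- move=> v; rewrite UE; split => [[c [cE ->]]|[c [cE ->]]].
    by exists (fun=> c); rewrite big_ord1.
  by exists (c 0); rewrite big_ord1.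
Qed.

End SpansOverSubfield.

(** * The dual of the public code *)

Lemma index_add_lt k N l j :
  (k < N)%N -> (l < k)%N -> (j < (N - k - 1).+1)%N -> (l + j < N - 1)%N.
Proof. lia. Qed.

Lemma index_split k N i : (0 < k)%N -> (i < N - 1)%N ->
  exists l j : nat, [/\ (l < k)%N, (j <= N - k - 1)%N & i = (l + j)%N].
Proof. by move=> k_gt0 lt_iN; exists (minn i k.-1), (i - minn i k.-1)%N; split; lia. Qed.

Section PublicCode.
Variables (F : finFieldType) (L : fieldExtType F) (E : {subfield L}) (m u k n w : nat).
Hypotheses (dimE : \dim E = m) (dimL : \dim {:L} = (m * u)%N).
Hypotheses (k_gt0 : (0 < k)%N) (lt_w_nk : (w < n - k)%N).
Variables (g : 'rV[L]_n) (x : 'rV[L]_k) (s : 'rV[L]_w) (P : 'M[F]_n).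
Variable gamma : 'I_u -> L.
Hypotheses (gE : inFqm E g) (rank_g : rank_weight g = n) (P_unit : P \in unitmx).

Local Notation frob := (@frob F L).
Local Notation Tr := (@trace_ext F L m u).
Local Notation G := (gab_mx k g).
Local Notation PL := (liftF L P).
Local Notation Pi := (liftF L (invmx P)).
Local Notation z := (pad_right n s *m Pi).
Local Notation K := (x *m G + z).
Local Notation Ki := (fun i : 'I_u => map_mx Tr (gamma i *: K)).
Local Notation bi := (fun i : 'I_u => pad_right n (map_mx Tr (gamma i *: s))).
Local Notation Cpub := (sumset (Espan E (fun i : 'I_k => row i G)) (Espan E Ki)).
Local Notation B := (Espan E bi).
Local Notation f := (n - w - k - 1)%N.

Let le_wn : (w <= n)%N. Proof. exact: ltnW (leq_trans lt_w_nk (leq_subr k n)). Qed.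
Let lt_k_nw : (k < n - w)%N. Proof. by rewrite ltn_subRL addnC -ltn_subRL. Qed.

Lemma row_gab_mx i : row i G = frobv i g.
Proof. by apply/rowP => j; rewrite !mxE. Qed.

Lemma trace_row i :
  Ki i = \sum_(l < k) Tr (gamma i * x 0 l) *: frobv l g + bi i *m Pi.
Proof.
apply/rowP => j; rewrite !mxE summxE mulrDr raddfD /=; congr (_ + _).
  rewrite mulr_sumr raddf_sum /=; apply: eq_bigr => l _; rewrite !mxE.
  by rewrite mulrA (mulrC _ (g 0 j ^+ _)) [LHS](trace_extMl _ dimE) ?rpredX ?gE // mulrC.
rewrite mulr_sumr raddf_sum /=; apply: eq_bigr => t _.
by rewrite !mxE /= rv_nth_map rv_nthZ !mulr_algr -scalerAr trace_extZ.
Qed.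

Lemma sum_trace_rows (d : 'I_u -> L) : \sum_i d i *: Ki i =
  \sum_(l < k) (\sum_i d i * Tr (gamma i * x 0 l)) *: frobv l g
  + (\sum_i d i *: bi i) *m Pi.
Proof.
rewrite (eq_bigr (fun i => \sum_(l < k) (d i * Tr (gamma i * x 0 l)) *: frobv l g
                          + d i *: (bi i *m Pi))); last first.
  move=> i _; rewrite trace_row scalerDr scaler_sumr; congr (_ + _).
  by apply: eq_bigr => l _; rewrite scalerA.
rewrite big_split /= exchange_big mulmx_suml; congr (_ + _).
  by apply: eq_bigr => l _; rewrite scaler_suml.
by apply: eq_bigr => i _; rewrite scalemxAl.
Qed.

Definition gab_head (v : 'rV[L]_n) := exists (mu : 'I_k -> L) (beta : 'rV[L]_n),
  head_supp w beta /\ v = \sum_(l < k) mu l *: frobv l g + beta *m Pi.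

Lemma Cpub_gab_head v : Cpub v -> gab_head v.
Proof.
move=> [_ [_ [[c [_ ->]] [[d [_ ->]] ->]]]].
exists (fun l => c l + \sum_i d i * Tr (gamma i * x 0 l)), (\sum_i d i *: bi i).
split; first by apply: head_supp_sum => i; apply: head_supp_pad.
rewrite sum_trace_rows addrA -big_split /=; congr (_ + _); apply: eq_bigr => l _.
by rewrite row_gab_mx scalerDl.
Qed.

Lemma frobv_gab_head j (mu : 'I_k -> L) beta :
  frobv j (\sum_(l < k) mu l *: frobv l g + beta *m Pi) =
  \sum_(l < k) frob j (mu l) *: frobv (l + j) g + frobv j beta *m Pi.
Proof.
rewrite frobvD frobv_sum frobv_liftF; congr (_ + _).
by apply: eq_bigr => l _; rewrite frobvZ frobv_frobv.
Qed.

Definition moore_cond (y : 'rV[L]_n) :=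
  forall i, (i < n - w - 1)%N -> dot (frobv i g) y = 0.

Lemma dual_of_conds y : inFqm E y -> moore_cond y -> tail_supp w (y *m Pi^T) ->
  dual E (Lambda f Cpub) y.
Proof.
move=> yE y_moore y_tail; split => // _ [us [Cus ->]].
change (dot (\sum_(j < f.+1) frobv j (us j)) y = 0).
rewrite dot_suml big1 // => j _.
have [mu [beta [beta_head ->]]] := Cpub_gab_head (Cus j).
rewrite frobv_gab_head dotDl dot_suml big1 ?add0r.
  by rewrite dot_mulmx; apply: dot_head_tail_supp (head_supp_frobv _ beta_head) y_tail.
by move=> l _; rewrite dotZl y_moore ?mulr0 // (index_add_lt lt_k_nw (ltn_ord l) (ltn_ord j)).
Qed.

Lemma Cpub0 : Cpub 0.
Proof. exact/sumset_l/Espan0/Espan0. Qed.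

(* g^[i] = (g^[l])^[i - l] with l < k a row of G and i - l <= f. *)
Lemma moore_cond_of_dual y : dual E (Lambda f Cpub) y -> moore_cond y.
Proof.
move=> [_ y_dual] i lt_i_nw.
have [l [j [lt_lk le_jf ->]]] := index_split k_gt0 lt_i_nw.
have Cpub_row : Cpub (row (Ordinal lt_lk) G) by apply/sumset_l/Espan0/Espan_gen.
by have := y_dual _ (Lambda_frobv le_jf Cpub0 Cpub_row); rewrite row_gab_mx frobv_frobv.
Qed.

Lemma B_Cpub v : B v -> Cpub (v *m Pi).
Proof.
move=> [c [cE ->]].
pose mu l := - \sum_i c i * Tr (gamma i * x 0 l).
exists (\sum_(l < k) mu l *: row l G), (\sum_i c i *: Ki i); split.
  exists mu; split => // l; rewrite rpredN rpred_sum // => i _.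
  by rewrite rpredM ?cE ?(trace_ext_in dimE dimL).
split; first by exists c.
rewrite sum_trace_rows addrA -big_split /= [X in _ = X + _]big1 ?add0r // => l _.
by rewrite row_gab_mx scaleNr addNr.
Qed.

Lemma LambdaB_Cpub v : Lambda f B v -> Lambda f Cpub (v *m Pi).
Proof.
move=> [us [Bus ->]]; exists (fun j => us j *m Pi); split => [j|]; first exact: B_Cpub.
by rewrite mulmx_suml; apply: eq_bigr => j _; rewrite frobv_liftF.
Qed.

Lemma LambdaB_head_supp v : Lambda f B v -> head_supp w v.
Proof.
move=> [us [Bus ->]] j le_wj; rewrite summxE big1 // => j' _.
have [c [_ ->]] := Bus j'; apply: (head_supp_frobv _ _ le_wj).
by apply: head_supp_sum => i; apply: head_supp_pad.
Qed.

(* An E-basis of Lambda_f(B) is a basis of E^w x 0, and y P^-T is orthogonal to it. *)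
Lemma tail_supp_of_dual y : has_dimE E (Lambda f B) w ->
  dual E (Lambda f Cpub) y -> tail_supp w (y *m Pi^T).
Proof.
move=> [b [Lb bE b_free _]] [yE y_dual]; set y' := y *m Pi^T.
have b_head i : head_supp w (b i) := LambdaB_head_supp (Lb i).
pose Bm : 'M[L]_w := \matrix_(i, t) rv_nth (b i) t.
have Bm_unit : Bm \in unitmx.
  apply: subfield_unitmx => [i t|c cE c_rel]; first by rewrite mxE rv_nth_inFqm.
  apply: b_free => //; apply/rowP => j; rewrite summxE mxE.
  case: (ltnP j w) => [lt_jw|le_wj]; last first.
    by rewrite big1 // => i _; rewrite mxE b_head ?mulr0.
  rewrite -[RHS](c_rel (Ordinal lt_jw)); apply: eq_bigr => i _.
  by rewrite !mxE /= rv_nthE.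
have Bm_y' : Bm *m \col_t rv_nth y' t = 0.
  apply/colP => i; rewrite !mxE -[RHS](y_dual _ (LambdaB_Cpub (Lb i))).
  rewrite -/(dot _ _) dot_mulmx (dot_head_supp _ le_wn (b_head i)).
  by apply: eq_bigr => t _; rewrite !mxE.
move=> t lt_tw; have := mulKmx Bm_unit (\col_t rv_nth y' t).
by rewrite Bm_y' mulmx0 => /colP /(_ (Ordinal lt_tw)) /esym; rewrite !mxE /= rv_nthE mxE => ->.
Qed.

Local Notation a := (fun t : 'I_(n - w) => rv_nth (g *m PL) (w + t)).

Lemma tail_free : Ffree a.
Proof.
apply: Ffree_tail le_wn _; apply: Ffree_mulmx_liftF P_unit _.
exact/rank_weight_full.
Qed.

Lemma tail_in t : a t \in E.
Proof. exact/rv_nth_inFqm/inFqm_mulmx_liftF. Qed.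

Lemma dot_frobv_pad_left i (h : 'rV[L]_(n - w)) :
  dot (frobv i g) (pad_left w n h *m PL^T) = \sum_t h 0 t * frob i (a t).
Proof.
rewrite -dot_mulmx -frobv_liftF dot_pad_left //; apply: eq_bigr => t _.
by rewrite frobvE rv_nth_map mulrC.
Qed.

Lemma moore_cond_pad_left (h : 'rV[L]_(n - w)) :
  moore_cond (pad_left w n h *m PL^T) <-> moore_ker (n - w).-1 a (fun t => h 0 t).
Proof.
split => [h_moore i | h_ker i lt_i].
  by rewrite -dot_frobv_pad_left h_moore // subn1.
by rewrite dot_frobv_pad_left; apply: (h_ker (Ordinal (_ : i < (n - w).-1)%N)); rewrite -subn1.
Qed.

Lemma PL_Pi : PL^T *m Pi^T = 1%:M.
Proof. by rewrite -trmx_mul liftF_invmx mulVmx ?liftF_unitmx // trmx1. Qed.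

Lemma Pi_PL : Pi^T *m PL^T = 1%:M.
Proof. by rewrite -trmx_mul liftF_invmx mulmxV ?liftF_unitmx // trmx1. Qed.

Lemma tail_supp_pad_left (h : 'rV[L]_(n - w)) :
  tail_supp w ((pad_left w n h *m PL^T) *m Pi^T).
Proof. by move=> t lt_tw; rewrite -mulmxA PL_Pi mulmx1 mxE lt_tw. Qed.

(* frob m fixes the tail a, so it maps the Moore kernel line to itself and fixes
   its normalized generator. *)
Lemma moore_generator : exists h : 'rV[L]_(n - w),
  [/\ inFqm E h, moore_ker (n - w).-1 a (fun t => h 0 t) & exists j0, h 0 j0 = 1].
Proof.
have lt_nw1_nw : ((n - w).-1 < n - w)%N by rewrite ltn_predL (leq_ltn_trans _ lt_k_nw).
have [h0 [j0 h0_j0] h0_ker] := moore_ker_exists a lt_nw1_nw.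
pose h1 j := h0 j / h0 j0.
have h1_ker : moore_ker (n - w).-1 a h1.
  move=> i; rewrite (eq_bigr (fun j => (h0 j0)^-1 * (h0 j * frob i (a j)))); last first.
    by move=> j _; rewrite /h1 mulrAC mulrC mulrA.
  by rewrite -mulr_sumr h0_ker mulr0.
have h1_j0 : h1 j0 = 1 by rewrite /h1 divff.
have frob_h1_ker : moore_ker (n - w).-1 a (fun j => frob m (h1 j)).
  move=> i; rewrite (eq_bigr (fun j => frob m (h1 j * frob i (a j)))); last first.
    move=> j _; rewrite [RHS]rmorphM /=; congr (_ * _); apply/eqP.
    by rewrite eq_sym -(mem_subfield_frob dimE) /frob rpredX ?tail_in.
  by rewrite -rmorph_sum /= h1_ker rmorph0.
have h1E j : h1 j \in E.
  rewrite (mem_subfield_frob dimE).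
  rewrite (moore_ker_line (j0 := j0) tail_free h1_ker frob_h1_ker) ?h1_j0.
    by rewrite rmorph1 divr1 mul1r.
  by rewrite oner_eq0.
exists (\row_j h1 j); split => [j||]; first by rewrite mxE.
  by move=> i; apply: etrans (h1_ker i); apply: eq_bigr => j _; rewrite mxE.
by exists j0; rewrite mxE.
Qed.

Lemma dual_line : has_dimE E (Lambda f B) w ->
  forall h : 'rV[L]_(n - w), inFqm E h -> moore_ker (n - w).-1 a (fun t => h 0 t) ->
  forall j0, h 0 j0 = 1 -> forall y,
  dual E (Lambda f Cpub) y <-> exists c, c \in E /\ y = c *: (pad_left w n h *m PL^T).
Proof.
move=> dimB h hE h_ker j0 h_j0 y; split => [y_dual | [c [cE ->]]]; last first.
  apply: dual_of_conds.
  - move=> j; rewrite mxE rpredM // trmx_liftF.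
    exact/inFqm_mulmx_liftF/inFqm_pad_left.
  - by move=> i lt_i; rewrite dotZr (proj2 (moore_cond_pad_left h) h_ker) ?mulr0.
  - by move=> t lt_tw; rewrite -scalemxAl mxE tail_supp_pad_left // mulr0.
pose hy : 'rV[L]_(n - w) := \row_t rv_nth (y *m Pi^T) (w + t).
have y_hy : y = pad_left w n hy *m PL^T.
  rewrite /hy -(pad_left_tail le_wn (tail_supp_of_dual dimB y_dual)).
  by rewrite -mulmxA Pi_PL mulmx1.
have hy_ker : moore_ker (n - w).-1 a (fun t => hy 0 t).
  by apply/moore_cond_pad_left; rewrite -y_hy; apply: moore_cond_of_dual.
exists (hy 0 j0); split.
  by rewrite mxE; apply/rv_nth_inFqm; rewrite trmx_liftF; apply/inFqm_mulmx_liftF; case: y_dual.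
rewrite {1}y_hy scalemxAl -pad_leftZ; congr (pad_left _ _ _ *m _); apply/rowP => t.
by rewrite [RHS]mxE (moore_ker_line (j0 := j0) tail_free h_ker hy_ker) ?h_j0 ?oner_eq0 // divr1.
Qed.

Lemma pad_left_PL_neq0 (h : 'rV[L]_(n - w)) : h != 0 -> pad_left w n h *m PL^T != 0.
Proof.
move=> h_neq0; apply: contraNneq h_neq0 => y0; apply/eqP/rowP => t.
have lt_wt : (w + t < n)%N by rewrite -ltn_subRL.
have := congr1 (fun v : 'rV_n => (v *m Pi^T) 0 (Ordinal lt_wt)) y0.
by rewrite -mulmxA PL_Pi mulmx1 mul0mx !mxE /= ltnNge leq_addr /= addKn rv_nthE => ->.
Qed.

Lemma transform_block_lower (h : 'rV[L]_(n - w)) c (T : 'M[F]_n) h' :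
  Ffree (fun t => h 0 t) -> c != 0 ->
  (c *: (pad_left w n h *m PL^T)) *m (liftF L (invmx T))^T = pad_left w n h' ->
  forall l j : 'I_n, (l < w)%N -> (w <= j)%N -> (invmx T *m P) l j = 0.
Proof.
move=> h_free c_neq0 eh' l j lt_lw; apply: (pad_left_liftF_head le_wn h_free).
have := congr1 (fun v : 'rV_n => v 0 l) eh'.
rewrite -scalemxAl -mulmxA -trmx_mul -liftF_mul mxE [RHS]mxE lt_lw.
by move=> /eqP; rewrite mulf_eq0 (negbTE c_neq0) => /eqP.
Qed.

(* P^-1 T is block lower triangular, so z T = (s | 0) P^-1 T is still supported
   on the first w coordinates, and (s | 0) = (z T) T^-1 P bounds the rank weight
   of s by that of z T. *)
Lemma transform_head_supp (T : 'M[F]_n) : rank_weight s = w -> T \in unitmx ->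
  (forall l j : 'I_n, (l < w)%N -> (w <= j)%N -> (invmx T *m P) l j = 0) ->
  exists zs : 'rV[L]_w, rank_weight zs = w /\ z *m liftF L T = pad_right n zs.
Proof.
move=> rank_s T_unit M_low; set M := invmx T *m P.
have M_unit : M \in unitmx by rewrite unitmx_mul unitmx_inv T_unit.
have invM : invmx M = invmx P *m T.
  have MN : M *m (invmx P *m T) = 1%:M.
    by rewrite /M mulmxA -(mulmxA (invmx T)) mulmxV // mulmx1 mulVmx.
  by rewrite -[RHS](mulKmx M_unit) MN mulmx1.
have zT : z *m liftF L T = pad_right n s *m liftF L (invmx M).
  by rewrite -mulmxA -liftF_mul invM.
have zT_head : head_supp w (z *m liftF L T).
  rewrite zT; apply: head_supp_mulmx_liftF (invmx_block_lower M_unit M_low) _.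
  exact: head_supp_pad.
pose zs : 'rV[L]_w := \row_t rv_nth (z *m liftF L T) t.
have ezs : z *m liftF L T = pad_right n zs := pad_right_head zT_head.
exists zs; split => //; apply/eqP; rewrite eqn_leq rank_weight_le -{1}rank_s /=.
apply: (@rank_weight_pad_right_le _ _ _ _ _ _ M le_wn).
by rewrite -ezs zT -mulmxA -liftF_mul mulVmx // liftF1 mulmx1.
Qed.

End PublicCode.

Theorem mainTheorem3
  (F : finFieldType) (L : fieldExtType F) (E : {subfield L})
  (m u k n w : nat)
  (hEdim : \dim E = m) (hLdim : \dim {:L} = (m * u)%N)
  (hu : (1 < u)%N) (huk : (u < k)%N) (hkn : (k < n)%N) (hnm : (n <= m)%N)
  (hw1 : (w < n - k)%N) (hw2 : ((n - k) %/ 2 < w)%N)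
  (g : 'rV[L]_n) (hgE : inFqm E g) (hg : rank_weight g = n)
  (x : 'rV[L]_k) (hx : basis_over E (fun i : 'I_u => rv_nth x (k - u + i)))
  (s : 'rV[L]_w) (hs : rank_weight s = w)
  (P : 'M[F]_n) (hP : P \in unitmx)
  (gamma : 'I_u -> L) (hgamma : basis_over E gamma) :
  let G := gab_mx k g in
  let z := pad_right n s *m liftF L (invmx P) in
  let K := x *m G + z in
  let Ki := fun i : 'I_u => map_mx (trace_ext m u) (gamma i *: K) in
  let bi := fun i : 'I_u => pad_right n (map_mx (trace_ext m u) (gamma i *: s)) in
  let Cpub := sumset (Espan E (fun i : 'I_k => row i G)) (Espan E Ki) in
  let B := Espan E bi in
  let f := (n - w - k - 1)%N in
  has_dimE E (Lambda f B) w ->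
  (has_dimE E (dual E (Lambda f Cpub)) 1 /\
   exists h : 'rV[L]_(n - w),
     [/\ inFqm E h, rank_weight h = (n - w)%N &
         forall y, dual E (Lambda f Cpub) y <->
           exists c, c \in E /\ y = c *: (pad_left w n h *m (liftF L P)^T)])
  /\
  (forall ht : 'rV[L]_n, dual E (Lambda f Cpub) ht -> ht != 0 ->
   forall T : 'M[F]_n, T \in unitmx ->
   (exists h' : 'rV[L]_(n - w), inFqm E h' /\
        ht *m (liftF L (invmx T))^T = pad_left w n h') ->
   exists zs : 'rV[L]_w, rank_weight zs = w /\ z *m liftF L T = pad_right n zs).
Proof.
move=> G z K Ki bi Cpub B f dimB.
have k_gt0 : (0 < k)%N by lia.
have [h [hE h_ker [j0 h_j0]]] := moore_generator hEdim hw1 hgE hg hP.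
have h_neq0 : exists j, h 0 j != 0 by exists j0; rewrite h_j0 oner_eq0.
have h_free := moore_ker_free (tail_free hw1 hg hP) h_neq0 h_ker.
have dual_eq := dual_line hEdim hLdim k_gt0 hw1 x hgE hg hP dimB hE h_ker h_j0.
split; first split.
- apply: has_dimE_line dual_eq.
    by rewrite trmx_liftF; apply/inFqm_mulmx_liftF/inFqm_pad_left.
  by apply: (pad_left_PL_neq0 hP); apply/rV0Pn.
- by exists h; split => //; apply/rank_weight_full.
- move=> ht /dual_eq [c [_ ->]] ht_neq0 T T_unit [h' [_ eh']].
  apply: (transform_head_supp hw1 hP hs T_unit).
  apply: (transform_block_lower hw1 h_free _ eh').
  by apply: contraNneq ht_neq0 => ->; rewrite scale0r.
Qed.
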